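(* At each $t$ where $g(t)=S(t)^{-1}\bar S(t)$, the matrix $J=S\Upsilon_1S^{-1}$ satisfies, for every $j\ge1$, $$J^j=\sum_{a=1}^{p_1}L_a^j=\sum_{b=1}^{p_2}\bar L_b^j,$$ and $J^j\mathcal A_{a'}=x^j\mathcal A_{a'}$, $(J^j)^\top\bar{\mathcal A}_{b'}=x^j\bar{\mathcal A}_{b'}$ for $a'=1,\dots,p_1$, $b'=1,\dots,p_2$.
   Context: $\mu$ finite Borel measure on an interval; weights $w_{1,a}$ ($a\le p_1$), $w_{2,b}$ ($b\le p_2$); compositions $\vec n_\ell\in\mathbb N^{p_\ell}$; each $i\in\mathbb Z_+$ is uniquely $i=q|\vec n_\ell|+n_{\ell,1}+\dots+n_{\ell,a-1}+r$ ($0\le r<n_{\ell,a}$), $a_\ell(i)=a$, $k_\ell(i)=qn_{\ell,a}+r$; moment matrix $g_{i,j}=\int x^{k_1(i)+k_2(j)}w_{1,a_1(i)}w_{2,a_2(j)}d\mu$. $e_{\ell,a}(k)=e_i$ with $a_\ell(i)=a,k_\ell(i)=k$; $\Lambda_{\ell,a}=\sum_ke_{\ell,a}(k)e_{\ell,a}(k+1)^\top$, $\Upsilon_\ell=\sum_a\Lambda_{\ell,a}$; $\chi_{\ell,a}(x)=\sum_ke_{\ell,a}(k)x^k$. Real times $t=(t_{j,a},\bar t_{j,b})$; $W_0(t)=\exp(\sum_{a,j}t_{j,a}\Lambda_{1,a}^j)$, $\bar W_0(t)=\exp(\sum_{b,j}\bar t_{j,b}(\Lambda_{2,b}^\top)^j)$,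 $g(t)=W_0(t)g\bar W_0(t)^{-1}$ (integrals assumed convergent), factorized as $g(t)=S(t)^{-1}\bar S(t)$ with $S$ unit lower triangular and $\bar S$ upper triangular invertible. $L_a=S\Lambda_{1,a}S^{-1}$, $\bar L_b=\bar S\Lambda_{2,b}^\top\bar S^{-1}$, $\mathcal A_a=S\chi_{1,a}(x)$, $\bar{\mathcal A}_b=(\bar S^{-1})^\top\chi_{2,b}(x)$. *)

From HB Require Import structures.
From mathcomp Require Import all_boot all_order all_algebra.
From mathcomp Require Import all_classical all_reals all_analysis.
Set Implicit Arguments. Unset Strict Implicit. Unset Printing Implicit Defensive.
Import Order.TTheory GRing.Theory Num.Theory.
Import numFieldNormedType.Exports.
Local Open Scope classical_set_scope.
Local Open Scope ring_scope.

(* Indices i, j of semi-infinite matrices range over nat (= Z_+ of the paper).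
   Block labels a range over 0 <= a < p (paper: 1 <= a <= p).
   A composition is a function n : nat -> nat of which only n 0, ..., n (p-1)
   are used. *)

Definition ctot (p : nat) (n : nat -> nat) : nat := (\sum_(a < p) n a)%N.
Definition cpre (n : nat -> nat) (a : nat) : nat := (\sum_(b < a) n b)%N.

(** a(i): the block label of i, i.e. the unique a with
    cpre a <= i mod |n| < cpre (a+1). *)
Definition cblk (p : nat) (n : nat -> nat) (i : nat) : nat :=
  find (fun a => i %% ctot p n < cpre n a.+1)%N (iota 0 p).

(** k(i) = q n_a + r  where  i = q |n| + n_1 + ... + n_{a-1} + r, 0 <= r < n_a *)
Definition ckk (p : nat) (n : nat -> nat) (i : nat) : nat :=
  (i %/ ctot p n * n (cblk p n i) + (i %% ctot p n - cpre n (cblk p n i)))%N.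

Definition smat (R : Type) := nat -> nat -> R.
Definition svec (R : Type) := nat -> R.

Section SemiInfinite.
Variable R : realType.

Definition idm : smat R := fun i j => (i == j)%:R.
Definition trm (A : smat R) : smat R := fun i j => A j i.
Definition madd (A B : smat R) : smat R := fun i j => A i j + B i j.
Definition mopp (A : smat R) : smat R := fun i j => - A i j.

Definition mmul (A B : smat R) : smat R :=
  fun i j => limn (fun N => \sum_(k < N) A i k * B k j).

Definition mvec (A : smat R) (v : svec R) : svec R :=
  fun i => limn (fun N => \sum_(k < N) A i k * v k).

Definition mpow (A : smat R) (m : nat) : smat R := iter m (mmul A) idm.

Definition mexp (A : smat R) : smat R :=
  fun i j => limn (fun N => \sum_(m < N) mpow A m i j / (m`!)%:R).

(** Lambda_{l,a} = sum_k e_{l,a}(k) e_{l,a}(k+1)^T, written entrywise: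
    the (i,i') entry is 1 iff a(i) = a(i') = a and k(i') = k(i) + 1. *)
Definition Lam (p : nat) (n : nat -> nat) (a : nat) : smat R :=
  fun i i' => ((cblk p n i == a) && (cblk p n i' == a)
               && (ckk p n i' == (ckk p n i).+1))%:R.

Definition Ups (p : nat) (n : nat -> nat) : smat R :=
  fun i i' => \sum_(a < p) Lam p n a i i'.

Definition chi (p : nat) (n : nat -> nat) (a : nat) (x : R) : svec R :=
  fun i => if cblk p n i == a then x ^+ ckk p n i else 0.

Definition moment (mu : {measure set R -> \bar R}) (I : interval R)
  (p1 p2 : nat) (n1 n2 : nat -> nat) (w1 w2 : nat -> R -> R) : smat R :=
  fun i j => Rintegral mu [set` I]
    (fun x => x ^+ (ckk p1 n1 i + ckk p2 n2 j) * w1 (cblk p1 n1 i) x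
              * w2 (cblk p2 n2 j) x).

(** sum_{a} sum_{j>=1} t_{j,a} Lambda_a^j  where Lambda_a := L a;
    the times are t a j = t_{j,a} (only j >= 1 is used). *)
Definition tflow (p : nat) (L : nat -> smat R) (t : nat -> nat -> R) : smat R :=
  fun i i' => \sum_(a < p)
     limn (fun N => \sum_(j < N) t a j.+1 * mpow (L a) j.+1 i i').

Definition W0 (p1 : nat) (n1 : nat -> nat) (t : nat -> nat -> R) : smat R :=
  mexp (tflow p1 (Lam p1 n1) t).

Definition Wb0 (p2 : nat) (n2 : nat -> nat) (tb : nat -> nat -> R) : smat R :=
  mexp (tflow p2 (fun b => trm (Lam p2 n2 b)) tb).
Definition Wb0inv (p2 : nat) (n2 : nat -> nat) (tb : nat -> nat -> R) : smat R :=
  mexp (mopp (tflow p2 (fun b => trm (Lam p2 n2 b)) tb)).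

Definition gt (p1 p2 : nat) (n1 n2 : nat -> nat) (g : smat R)
  (t tb : nat -> nat -> R) : smat R :=
  mmul (mmul (W0 p1 n1 t) g) (Wb0inv p2 n2 tb).

Definition lower_tri (A : smat R) : Prop := forall i j, (i < j)%N -> A i j = 0.
Definition upper_tri (A : smat R) : Prop := forall i j, (j < i)%N -> A i j = 0.

End SemiInfinite.

From HB Require Import structures.
From mathcomp Require Import all_boot all_order all_algebra.
From mathcomp Require Import all_classical all_reals all_analysis.
From mathcomp Require Import zify.
Import Order.TTheory GRing.Theory Num.Theory.
Import numFieldNormedType.Exports.

Set Implicit Arguments.
Unset Strict Implicit.
Unset Printing Implicit Defensive.

(* Let [s_l] be the shift inside the blocks of [n_l] ([a_l] kept, [k_l] raised by one).
   Then [Ups_l] is the selection matrix of [s_l], the [Lambda_{l,a}] are mutually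
   orthogonal with sum [Ups_l], and [chi_{l,a}(x)] is an eigenvector of [Ups_l] for [x].
   The moment matrix satisfies [g (s_1 i) k = g i (s_2 k)], i.e. [Ups_1 g = g Ups_2^T];
   [W_0(t)] and [bar W_0(t)^{-1}] commute with the shifts, so [g(t) = S^{-1} bar S] keeps
   this property and [J = S Ups_1 S^{-1} = bar S Ups_2^T bar S^{-1}].  Powers of [J] split
   along the orthogonal [Lambda]'s, and the eigenvectors are carried through the
   conjugations.  Triangularity turns every product into a finite sum (after transposing
   the upper triangular factors), which makes the semi-infinite products associative. *)

Section Composition.
Variables (p : nat) (n : nat -> nat).
Hypothesis p_gt0 : 0 < p.
Hypothesis n_gt0 : forall a, a < p -> 0 < n a.

Local Notation tot := (ctot p n).
Local Notation pre := (cpre n).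
Local Notation blk := (cblk p n).
Local Notation kk := (ckk p n).

Lemma cpreS a : pre a.+1 = pre a + n a.
Proof. by rewrite /cpre big_ord_recr. Qed.

Lemma leq_cpre a b : a <= b -> pre a <= pre b.
Proof.
move=> /subnK <-; elim: (b - a) => [|k IH] //.
by rewrite addSn cpreS; apply: leq_trans IH (leq_addr _ _).
Qed.

Lemma cpreS_le_ctot a : a < p -> pre a + n a <= tot.
Proof. by move=> ap; rewrite -cpreS leq_cpre. Qed.

Lemma ctot_gt0 : 0 < tot.
Proof.
apply: leq_trans _ (cpreS_le_ctot p_gt0).
by rewrite /cpre big_ord0 add0n n_gt0.
Qed.

Lemma cblkP i : blk i < p /\ pre (blk i) <= i %% tot < pre (blk i) + n (blk i).
Proof.
set P := fun a => i %% tot < pre a.+1.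
have has_P : has P (iota 0 p).
  apply/hasP; exists p.-1; first by rewrite mem_iota; lia.
  by rewrite /P prednK // ltn_pmod // ctot_gt0.
have blk_lt : blk i < p by rewrite -[X in _ < X](size_iota 0 p) -has_find.
split => //; rewrite -cpreS.
have := nth_find 0 has_P; rewrite nth_iota // add0n /P => ->; rewrite andbT.
rewrite /cblk -/P; case e: (find P (iota 0 p)) => [|a]; first by rewrite /cpre big_ord0.
have a_lt : a < find P (iota 0 p) by rewrite e.
move: (before_find 0 a_lt); rewrite nth_iota /P; last by rewrite /cblk -/P e in blk_lt; lia.
by rewrite add0n ltnNge => /negbFE.
Qed.

Lemma cblk_lt i : blk i < p. Proof. by case: (cblkP i). Qed.

Lemma cblk_eq i a : pre a <= i %% tot < pre a + n a -> blk i = a.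
Proof.
have [_ /andP[lb ub]] := cblkP i; move=> /andP[la ua].
case: (ltngtP (blk i) a) => // [lt|gt].
- by have := leq_cpre lt; rewrite cpreS; lia.
- by have := leq_cpre gt; rewrite cpreS; lia.
Qed.

Definition cidx a c := c %/ n a * tot + (pre a + c %% n a).

Lemma cidx_divmod a q r : a < p -> r < n a ->
  cidx a (q * n a + r) = q * tot + (pre a + r).
Proof.
move=> ap rn; rewrite /cidx divnMDl ?n_gt0 // divn_small // addn0.
by rewrite modnMDl modn_small.
Qed.

Lemma cidx_rem_lt a c : a < p -> pre a + c %% n a < tot.
Proof.
move=> ap; apply: leq_trans (cpreS_le_ctot ap).
by rewrite ltn_add2l ltn_pmod ?n_gt0.
Qed.

Lemma cblk_cidx a c : a < p -> blk (cidx a c) = a.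
Proof.
move=> ap; apply: cblk_eq.
rewrite /cidx modnMDl (@modn_small (pre a + _)) ?cidx_rem_lt // leq_addr /= ltn_add2l.
by rewrite ltn_pmod ?n_gt0.
Qed.

Lemma ckk_cidx a c : a < p -> kk (cidx a c) = c.
Proof.
move=> ap; rewrite /ckk cblk_cidx // /cidx modnMDl (@modn_small (pre a + _)).
  rewrite divnMDl ?ctot_gt0 // (@divn_small (pre a + _)) ?cidx_rem_lt //.
  by rewrite addn0 addKn -divn_eq.
exact: cidx_rem_lt.
Qed.

Lemma cidxK i : cidx (blk i) (kk i) = i.
Proof.
have [ap /andP[lb ub]] := cblkP i.
by rewrite /ckk cidx_divmod // ?subnKC -?divn_eq //; lia.
Qed.

Lemma cblk_ckk_inj i k : blk i = blk k -> kk i = kk k -> i = k.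
Proof. by move=> eb ek; rewrite -(cidxK i) -(cidxK k) eb ek. Qed.

Lemma cidx_ltS a c : a < p -> cidx a c < cidx a c.+1.
Proof.
move=> ap; have na_gt0 := n_gt0 ap; have := cpreS_le_ctot ap.
rewrite {2}(divn_eq c (n a)) {1}(divn_eq c (n a)) -addnS.
have rn := ltn_pmod c na_gt0.
set q := c %/ n a; set r := c %% n a; rewrite cidx_divmod //.
case: (ltnP r.+1 (n a)) => rSn; first by rewrite cidx_divmod //; lia.
have -> : r.+1 = n a by apply/eqP; rewrite eqn_leq rSn rn.
by rewrite -mulSnr -[X in cidx a X]addn0 cidx_divmod //; lia.
Qed.

Definition cshift i := cidx (blk i) (kk i).+1.

Lemma cblk_cshift i : blk (cshift i) = blk i.
Proof. by rewrite /cshift cblk_cidx // cblk_lt. Qed.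

Lemma ckk_cshift i : kk (cshift i) = (kk i).+1.
Proof. by rewrite /cshift ckk_cidx // cblk_lt. Qed.

Lemma cshift_inj : injective cshift.
Proof.
move=> i k e; apply: cblk_ckk_inj; first by rewrite -cblk_cshift e cblk_cshift.
by apply/eqP; rewrite -eqSS -!ckk_cshift e.
Qed.

Lemma cshift_cidx a c : a < p -> cshift (cidx a c) = cidx a c.+1.
Proof. by move=> ap; rewrite /cshift cblk_cidx // ckk_cidx. Qed.

End Composition.

Local Open Scope classical_set_scope.
Local Open Scope ring_scope.

Section SeriesLimits.
Variable R : realType.

Lemma limn_eq_comp (v w : nat -> R) (C f : nat -> nat) :
  C n @[n --> \oo] --> \oo -> f n @[n --> \oo] --> \oo ->
  (forall n, v n = w (C n)) -> (forall k, w k = v (f k)) -> limn v = limn w.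
Proof.
move=> C_oo f_oo vwC wvf.
have ev : v = w \o C by apply/funext => N; rewrite vwC.
have ew : w = v \o f by apply/funext => k; rewrite wvf.
rewrite /lim /lim_in; congr get; apply/funext => l; apply/propext; split => cvg_l.
- by rewrite ew; apply: cvg_comp f_oo cvg_l.
- by rewrite ev; apply: cvg_comp C_oo cvg_l.
Qed.

Lemma limn_shiftS (u : nat -> R) : limn (fun n => u n.+1) = limn u.
Proof.
rewrite /lim /lim_in; congr get; apply/funext => l; apply/propext.
by rewrite -(cvg_shiftS u).
Qed.

Lemma limn_series_finite (a : nat -> R) K : (forall k, (K <= k)%N -> a k = 0) ->
  limn (fun N => \sum_(k < N) a k) = \sum_(k < K) a k.
Proof.
move=> a_vanish; apply: norm_lim_near_cst; near=> N.
have KN : (K <= N)%N by near: N; apply: nbhs_infty_ge.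
rewrite -!(big_mkord xpredT) (big_cat_nat (leq0n K) KN) /=.
rewrite [X in _ + X]big_nat_cond [X in _ + X]big1 ?addr0 // => k /andP[/andP[Kk _] _].
exact: a_vanish.
Unshelve. all: end_near.
Qed.

Lemma limn_series_eq0 (a : nat -> R) : (forall k, a k = 0) ->
  limn (fun N => \sum_(k < N) a k) = 0.
Proof. by move=> a0; rewrite (@limn_series_finite a 0) ?big_ord0. Qed.

End SeriesLimits.

Fixpoint nbelow (f : nat -> nat) (N : nat) : nat :=
  if N is N'.+1 then (nbelow f N' + (f (nbelow f N') == N'))%N else 0%N.

Section Reindex.
Variable R : realType.
Variable f : nat -> nat.
Hypothesis f_incr : forall k, (f k < f k.+1)%N.

Let f_leq : {mono f : k k' / (k <= k')%N}.
Proof. exact/leq_mono/(homo_ltn ltn_trans f_incr). Qed.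

Let f_ltn : {mono f : k k' / (k < k')%N}.
Proof. exact: leqW_mono. Qed.

Lemma leq_incr k : (k <= f k)%N.
Proof. by elim: k => // k IH; apply: leq_ltn_trans IH (f_incr k). Qed.

Lemma nbelow_neq N : (forall k, (k < nbelow f N) = (f k < N))%N ->
  f (nbelow f N) != N -> forall k, f k != N.
Proof.
move=> below fN k; apply: contra_neq fN => fk.
have : ~~ (k < nbelow f N)%N by rewrite below fk ltnn.
rewrite -leqNgt leq_eqVlt => /orP[/eqP -> //|lt].
by move: (lt); rewrite -f_ltn fk -below ltnn.
Qed.

Lemma ltn_nbelow N k : (k < nbelow f N)%N = (f k < N)%N.
Proof.
elim: N k => [|N IH] k /=; first by rewrite ltn0.
case: eqP => [fN|/eqP fN]; first by rewrite addn1 !ltnS -f_leq fN.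
by rewrite addn0 IH ltnS [(f k <= N)%N]leq_eqVlt (negbTE (nbelow_neq IH fN k)).
Qed.

Lemma nbelowK k : nbelow f (f k) = k.
Proof.
apply/eqP; rewrite eqn_leq; apply/andP; split; rewrite leqNgt.
- by rewrite ltn_nbelow ltnn.
- by rewrite -f_ltn -ltn_nbelow ltnn.
Qed.

Lemma limn_series_reindex (u v : nat -> R) :
  (forall k, v (f k) = u k) -> (forall N, (forall k, f k != N) -> v N = 0) ->
  limn (fun N => \sum_(k < N) v k) = limn (fun N => \sum_(k < N) u k).
Proof.
move=> vf_u v_off.
have partial N : \sum_(k < N) v k = \sum_(k < nbelow f N) u k.
  elim: N => [|N IH]; first by rewrite !big_ord0.
  rewrite big_ord_recr /= IH; case: eqP => [fN|/eqP fN].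
    by rewrite addn1 big_ord_recr /= -vf_u fN.
  by rewrite addn0 v_off ?addr0 // => k; exact: nbelow_neq (ltn_nbelow N) fN k.
apply: (@limn_eq_comp R _ _ (nbelow f) f) => // [||k]; last by rewrite partial nbelowK.
- apply/cvgnyPge => K; near=> N; apply: ltnW; rewrite ltn_nbelow.
  by near: N; apply: nbhs_infty_gt.
- apply/cvgnyPge => K; near=> N; apply: leq_trans (leq_incr N).
  by near: N; apply: nbhs_infty_ge.
Unshelve. all: end_near.
Qed.
End Reindex.

Section RowFinite.
Variable R : realType.
Implicit Types (A B C : smat R) (v : svec R).

Definition rowfin A := forall i, exists K, forall k, (K <= k)%N -> A i k = 0.

Definition selm (f : nat -> nat) : smat R := fun i k => (k == f i)%:R.

Lemma mvec_row_bound K A v i : (forall k, (K <= k)%N -> A i k = 0) ->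
  mvec A v i = \sum_(k < K) A i k * v k.
Proof.
move=> A0; rewrite /mvec (@limn_series_finite _ (fun k => A i k * v k) K) // => k /A0->.
by rewrite mul0r.
Qed.

Lemma mmul_row_bound K A B i j : (forall k, (K <= k)%N -> A i k = 0) ->
  mmul A B i j = \sum_(k < K) A i k * B k j.
Proof. exact: (@mvec_row_bound K A (B ^~ j) i). Qed.

Lemma mmul_col_bound K A B i j : (forall k, (K <= k)%N -> B k j = 0) ->
  mmul A B i j = \sum_(k < K) A i k * B k j.
Proof.
move=> B0; rewrite /mmul (@limn_series_finite _ (fun k => A i k * B k j) K) // => k /B0->.
by rewrite mulr0.
Qed.

Lemma selm_bound f i k : (f i < k)%N -> selm f i k = 0.
Proof. by rewrite /selm; case: eqP => // ->; rewrite ltnn. Qed.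

Lemma mvec_selm f v i : mvec (selm f) v i = v (f i).
Proof.
rewrite (mvec_row_bound (K := (f i).+1)) => [|k]; last exact: selm_bound.
rewrite big_ord_recr /= {2}/selm eqxx mul1r big1 ?add0r // => k _.
by rewrite /selm (ltn_eqF (ltn_ord k)) mul0r.
Qed.

Lemma mmul_selm f A i j : mmul (selm f) A i j = A (f i) j.
Proof. exact: (mvec_selm f (A ^~ j)). Qed.

Lemma mmul_trm_selm f A i j : mmul A (trm (selm f)) i j = A i (f j).
Proof.
rewrite (mmul_col_bound (K := (f j).+1)) => [|k]; last exact: selm_bound.
rewrite big_ord_recr /= /trm {2}/selm eqxx mulr1 big1 ?add0r // => k _.
by rewrite /selm (ltn_eqF (ltn_ord k)) mulr0.
Qed.

Lemma rowfin_selm f : rowfin (selm f).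
Proof. by move=> i; exists (f i).+1; apply: selm_bound. Qed.

Lemma idm_selm : idm R = selm id.
Proof. by apply/funext => i; apply/funext => k; rewrite /idm /selm eq_sym. Qed.

Lemma rowfin_idm : rowfin (idm R).
Proof. by rewrite idm_selm; apply: rowfin_selm. Qed.

Lemma mmul1m A : mmul (idm R) A = A.
Proof. by apply/funext => i; apply/funext => j; rewrite idm_selm mmul_selm. Qed.

Lemma mmulm1 A : mmul A (idm R) = A.
Proof. by apply/funext => i; apply/funext => j; apply: (mmul_trm_selm id). Qed.

Lemma mvec1 v : mvec (idm R) v = v.
Proof. by apply/funext => i; rewrite idm_selm mvec_selm. Qed.

Lemma mmul0m B : mmul (fun _ _ => 0) B = (fun _ _ => 0).
Proof. by apply/funext => i; apply/funext => j; rewrite (mmul_row_bound (K := 0)) ?big_ord0. Qed.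

Lemma rowfin_lower A : lower_tri A -> rowfin A.
Proof. by move=> A_low i; exists i.+1 => k; apply: A_low. Qed.

Lemma rowfin_trm_upper A : upper_tri A -> rowfin (trm A).
Proof. by move=> A_up i; exists i.+1 => k; apply: A_up. Qed.

Lemma trm_mmul A B : trm (mmul A B) = mmul (trm B) (trm A).
Proof.
apply/funext => i; apply/funext => j; rewrite /trm /mmul; congr (limn _).
by apply/funext => N; apply: eq_bigr => k _; rewrite mulrC.
Qed.

Lemma trm_idm : trm (idm R) = idm R.
Proof. by apply/funext => i; apply/funext => k; rewrite /trm /idm eq_sym. Qed.

Lemma rowfin_family (F : nat -> smat R) p : (forall a, rowfin (F a)) ->
  forall i, exists K, forall a, (a < p)%N -> forall k, (K <= k)%N -> F a i k = 0.
Proof.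
move=> F_fin i; elim: p => [|p [K K_F]]; first by exists 0%N.
have [K' K'_F] := F_fin p i; exists (maxn K K') => a.
rewrite ltnS leq_eqVlt => /orP[/eqP->|ap] k; rewrite geq_max => /andP[Kk K'k].
- exact: K'_F.
- exact: K_F.
Qed.

Lemma rowfin_sum (F : nat -> smat R) p : (forall a, rowfin (F a)) ->
  rowfin (fun i k => \sum_(a < p) F a i k).
Proof.
move=> F_fin i; have [K K_F] := rowfin_family p F_fin i.
by exists K => k Kk; apply: big1 => a _; apply: K_F.
Qed.

Lemma rowfin_rows A K : rowfin A ->
  exists M, forall i, (i < K)%N -> forall k, (M <= k)%N -> A i k = 0.
Proof.
move=> A_fin; have [M M_A] := rowfin_family K (F := fun i _ => A i) (fun i _ => A_fin i) 0%N.
by exists M.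
Qed.

Lemma mmul_row_vanish A B i K M : (forall k, (K <= k)%N -> A i k = 0) ->
  (forall k, (k < K)%N -> forall l, (M <= l)%N -> B k l = 0) ->
  forall l, (M <= l)%N -> mmul A B i l = 0.
Proof.
move=> A0 B0 l Ml; rewrite (mmul_row_bound (K := K)) // big1 // => k _.
by rewrite B0 ?mulr0.
Qed.

Lemma rowfin_mmul A B : rowfin A -> rowfin B -> rowfin (mmul A B).
Proof.
move=> A_fin B_fin i; have [K A0] := A_fin i; have [M B0] := rowfin_rows K B_fin.
by exists M; apply: mmul_row_vanish A0 B0.
Qed.

Lemma mvec_mmul A B v : rowfin A -> rowfin B -> mvec (mmul A B) v = mvec A (mvec B v).
Proof.
move=> A_fin B_fin; apply/funext => i.
have [K A0] := A_fin i; have [M M_B] := rowfin_rows K B_fin.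
rewrite (mvec_row_bound _ (mmul_row_vanish A0 M_B)) (mvec_row_bound (K := K)) //.
under eq_bigr => l _ do rewrite (mmul_row_bound (K := K)) // mulr_suml.
rewrite exchange_big /=; apply: eq_bigr => k _.
rewrite (mvec_row_bound _ (M_B k (ltn_ord k))) mulr_sumr.
by apply: eq_bigr => l _; rewrite mulrA.
Qed.

Lemma mmulA A B C : rowfin A -> rowfin B -> mmul (mmul A B) C = mmul A (mmul B C).
Proof.
move=> A_fin B_fin; apply/funext => i; apply/funext => j.
by have := congr1 (fun w => w i) (mvec_mmul (C ^~ j) A_fin B_fin).
Qed.

Lemma mmulA_trm A B C : rowfin A -> rowfin (trm C) ->
  mmul A (mmul B C) = mmul (mmul A B) C.
Proof.
move=> A_fin C_fin; apply/funext => i; apply/funext => j.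
have [K A0] := A_fin i; have [L C0] := C_fin j.
rewrite (mmul_row_bound (K := K)) // (mmul_col_bound (K := L)) //.
under eq_bigr => k _ do rewrite (mmul_col_bound (K := L)) // mulr_sumr.
rewrite exchange_big /=; apply: eq_bigr => l _.
rewrite (mmul_row_bound (K := K)) // mulr_suml.
by apply: eq_bigr => k _; rewrite mulrA.
Qed.

Lemma mmul_sumr A (F : nat -> smat R) p : rowfin A ->
  mmul A (fun i j => \sum_(a < p) F a i j) = (fun i j => \sum_(a < p) mmul A (F a) i j).
Proof.
move=> A_fin; apply/funext => i; apply/funext => j; have [K A0] := A_fin i.
rewrite (mmul_row_bound (K := K)) //; under eq_bigr => k _ do rewrite mulr_sumr.
by rewrite exchange_big; apply: eq_bigr => a _; rewrite (mmul_row_bound (K := K)).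
Qed.

Lemma mmul_suml (F : nat -> smat R) C p : (forall a, rowfin (F a)) ->
  mmul (fun i j => \sum_(a < p) F a i j) C = (fun i j => \sum_(a < p) mmul (F a) C i j).
Proof.
move=> F_fin; apply/funext => i; apply/funext => j.
have [K F0] := rowfin_family p F_fin i.
rewrite (mmul_row_bound (K := K)) => [|k Kk]; last by apply: big1 => a _; apply: F0.
under eq_bigr => k _ do rewrite mulr_suml.
by rewrite exchange_big; apply: eq_bigr => a _; rewrite (mmul_row_bound (K := K)) // => k; apply: F0.
Qed.

Lemma mvecZ A (c : R) v : rowfin A ->
  mvec A (fun i => c * v i) = (fun i => c * mvec A v i).
Proof.
move=> A_fin; apply/funext => i; have [K A0] := A_fin i.
rewrite !(mvec_row_bound (K := K)) // mulr_sumr; apply: eq_bigr => k _.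
by rewrite mulrCA.
Qed.

Lemma rowfin_mpow A j : rowfin A -> rowfin (mpow A j).
Proof. by move=> A_fin; elim: j => [|j IH]; [exact: rowfin_idm|exact: rowfin_mmul]. Qed.

Lemma mpowS A j : mpow A j.+1 = mmul A (mpow A j).
Proof. by []. Qed.

Lemma mpowSr A j : rowfin A -> mpow A j.+1 = mmul (mpow A j) A.
Proof.
move=> A_fin; elim: j => [|j IH]; first by rewrite /= mmulm1 mmul1m.
by rewrite mpowS [in LHS]IH -mmulA //; apply: rowfin_mpow.
Qed.

Lemma trm_mpow A j : rowfin (trm A) -> trm (mpow A j) = mpow (trm A) j.
Proof.
move=> A_fin; elim: j => [|j IH]; first exact: trm_idm.
by rewrite mpowS trm_mmul IH -mpowSr.
Qed.

End RowFinite.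

Section Powers.
Variable R : realType.
Implicit Types (A M U : smat R) (v : svec R).

Definition orthogonal_family (Lm : nat -> smat R) p :=
  forall a b, (a < p)%N -> (b < p)%N -> a != b -> mmul (Lm a) (Lm b) = (fun _ _ => 0).

Lemma mpow_sum_orth (Lm : nat -> smat R) p j : (forall a, rowfin (Lm a)) ->
  orthogonal_family Lm p ->
  (1 <= j)%N ->
  mpow (fun i k => \sum_(a < p) Lm a i k) j = (fun i k => \sum_(a < p) mpow (Lm a) j i k).
Proof.
move=> Lm_fin Lm_orth; elim: j => // -[|j] IH _.
  apply/funext => i; apply/funext => k; rewrite /= mmulm1.
  by apply: eq_bigr => a _; rewrite mmulm1.
rewrite mpowS IH // (mmul_sumr (fun a => mpow (Lm a) j.+1) p (rowfin_sum p Lm_fin)).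
apply/funext => i; apply/funext => k; apply: eq_bigr => b _.
rewrite (mmul_suml (mpow (Lm b) j.+1) p Lm_fin) (bigD1 b) //= big1 ?addr0 // => a ab.
by rewrite -mmulA // Lm_orth // mmul0m.
Qed.

Lemma mvec_mpow_eigen U v (x : R) j : rowfin U ->
  mvec U v = (fun i => x * v i) -> mvec (mpow U j) v = (fun i => x ^+ j * v i).
Proof.
move=> U_fin Uv; elim: j => [|j IH].
  by rewrite /= mvec1; apply/funext => i; rewrite mul1r.
rewrite mpowS (mvec_mmul _ U_fin (rowfin_mpow j U_fin)) IH mvecZ // Uv.
by apply/funext => i; rewrite exprS mulrA [x * _]mulrC.
Qed.

Lemma trm_conj A M B : rowfin (trm B) -> rowfin (trm M) ->
  trm (mmul (mmul A M) B) = mmul (mmul (trm B) (trm M)) (trm A).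
Proof. by move=> B_fin M_fin; rewrite !trm_mmul mmulA. Qed.

Section Conjugation.
Variables P Q : smat R.
Hypotheses (P_fin : rowfin P) (Q_fin : rowfin Q) (QP : mmul Q P = idm R).

Lemma mpow_conj M j : rowfin M -> (1 <= j)%N ->
  mpow (mmul (mmul P M) Q) j = mmul (mmul P (mpow M j)) Q.
Proof.
move=> M_fin; elim: j => // -[|j] IH _; first by rewrite /= !mmulm1.
have PM_fin := rowfin_mmul P_fin M_fin.
have Mj_fin := rowfin_mpow j.+1 M_fin; set Mj := mpow M j.+1 in Mj_fin *.
have QPMjQ : mmul Q (mmul (mmul P Mj) Q) = mmul Mj Q.
  by rewrite -(mmulA _ Q_fin (rowfin_mmul P_fin Mj_fin)) -(mmulA _ Q_fin P_fin) QP mmul1m.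
rewrite mpowS IH // (mmulA _ PM_fin Q_fin) QPMjQ (mmulA _ P_fin M_fin).
by rewrite -(mmulA _ M_fin Mj_fin) -(mmulA _ P_fin (rowfin_mmul M_fin Mj_fin)).
Qed.

Lemma mpow_conj_sum_orth (Lm : nat -> smat R) p j : (forall a, rowfin (Lm a)) ->
  orthogonal_family Lm p ->
  (1 <= j)%N -> forall i k,
  mpow (mmul (mmul P (fun i k => \sum_(a < p) Lm a i k)) Q) j i k =
  \sum_(a < p) mpow (mmul (mmul P (Lm a)) Q) j i k.
Proof.
move=> Lm_fin Lm_orth j_gt0 i k.
rewrite (mpow_conj (rowfin_sum p Lm_fin) j_gt0) (mpow_sum_orth Lm_fin Lm_orth j_gt0).
rewrite (mmul_sumr (fun a => mpow (Lm a) j) p P_fin).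
rewrite (mmul_suml Q p (F := fun a => mmul P (mpow (Lm a) j))) => [|a]; last first.
  exact/rowfin_mmul/rowfin_mpow.
by apply: eq_bigr => a _; rewrite mpow_conj.
Qed.

Lemma mvec_mpow_conj_eigen U v (x : R) j : rowfin U ->
  mvec U v = (fun i => x * v i) -> (1 <= j)%N -> forall i,
  mvec (mpow (mmul (mmul P U) Q) j) (mvec P v) i = x ^+ j * mvec P v i.
Proof.
move=> U_fin Uv j_gt0 i; have Uj_fin := rowfin_mpow j U_fin.
rewrite (mpow_conj U_fin j_gt0) (mvec_mmul _ (rowfin_mmul P_fin Uj_fin) Q_fin).
rewrite -(mvec_mmul v Q_fin P_fin) QP mvec1.
by rewrite (mvec_mmul v P_fin Uj_fin) (mvec_mpow_eigen j U_fin Uv) mvecZ.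
Qed.

End Conjugation.

Section ConjugationTrm.
Variables P Q : smat R.
Hypotheses (P_fin : rowfin (trm P)) (Q_fin : rowfin (trm Q)) (QP : mmul Q P = idm R).

Let QP_trm : mmul (trm P) (trm Q) = idm R.
Proof. by rewrite -trm_mmul QP trm_idm. Qed.

Lemma trm_mpow_conj X j : rowfin X ->
  trm (mpow (mmul (mmul P (trm X)) Q) j) = mpow (mmul (mmul (trm Q) X) (trm P)) j.
Proof. by move=> X_fin; rewrite trm_mpow trm_conj //; apply/rowfin_mmul/P_fin/rowfin_mmul. Qed.

Lemma mpow_conj_trm_sum_orth (Lm : nat -> smat R) p j : (forall a, rowfin (Lm a)) ->
  orthogonal_family Lm p ->
  (1 <= j)%N -> forall i k,
  mpow (mmul (mmul P (fun i k => \sum_(a < p) trm (Lm a) i k)) Q) j i k =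
  \sum_(a < p) mpow (mmul (mmul P (trm (Lm a))) Q) j i k.
Proof.
move=> Lm_fin Lm_orth j_gt0 i k.
have := congr1 (fun A => A k i) (trm_mpow_conj j (rowfin_sum p Lm_fin)); rewrite /trm => ->.
rewrite mpow_conj_sum_orth //.
by apply: eq_bigr => a _; rewrite -trm_mpow_conj.
Qed.

Lemma mvec_trm_mpow_conj_eigen U v (x : R) j : rowfin U ->
  mvec U v = (fun i => x * v i) -> (1 <= j)%N -> forall i,
  mvec (trm (mpow (mmul (mmul P (trm U)) Q) j)) (mvec (trm Q) v) i =
  x ^+ j * mvec (trm Q) v i.
Proof.
move=> U_fin Uv j_gt0 i; rewrite trm_mpow_conj //.
exact: (mvec_mpow_conj_eigen Q_fin P_fin QP_trm U_fin Uv j_gt0).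
Qed.

End ConjugationTrm.

Lemma conj_intertwine S Si Sb Sbi U V :
  rowfin S -> rowfin Si -> rowfin (trm Sbi) -> rowfin U -> rowfin (trm V) ->
  mmul S Si = idm R -> mmul Sb Sbi = idm R ->
  mmul U (mmul Si Sb) = mmul (mmul Si Sb) V ->
  mmul (mmul S U) Si = mmul (mmul Sb V) Sbi.
Proof.
move=> S_fin Si_fin Sbi_fin U_fin V_fin SSi SbSbi UG.
have J_fin : rowfin (mmul (mmul S U) Si) by apply/rowfin_mmul/Si_fin/rowfin_mmul.
have JSb : mmul (mmul (mmul S U) Si) Sb = mmul Sb V.
  rewrite (mmulA Sb (rowfin_mmul S_fin U_fin) Si_fin) (mmulA _ S_fin U_fin) UG.
  by rewrite -(mmulA_trm Sb Si_fin V_fin) -(mmulA _ S_fin Si_fin) SSi mmul1m.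
by rewrite -JSb -(mmulA_trm Sb J_fin Sbi_fin) SbSbi mmulm1.
Qed.

End Powers.

Section ShiftCommuting.
Variable R : realType.
Variables (p : nat) (n : nat -> nat).
Hypothesis p_gt0 : (0 < p)%N.
Hypothesis n_gt0 : forall a, (a < p)%N -> (0 < n a)%N.

Local Notation blk := (cblk p n).
Local Notation kk := (ckk p n).
Local Notation s := (cshift p n).

(* Block diagonal and commuting with [Ups p n] = [selm s], entrywise:
   [(Ups A) i k = A (s i) k], while [(A Ups) i k] is [A i l] when [k = s l]
   and [0] when [k] starts its block. *)
Definition shift_comm (A : smat R) :=
  [/\ forall i k, blk k <> blk i -> A i k = 0,
      forall i k, A (s i) (s k) = A i k &
      forall i k, blk k = blk i -> kk k = 0 -> A (s i) k = 0].

Lemma cidx_notin_cblk a N : (forall c, cidx p n a c != N) -> blk N <> a.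
Proof. by move=> notin ea; move: (notin (kk N)); rewrite -ea (cidxK p_gt0 n_gt0) eqxx. Qed.

(* Entrywise form of [Ups (A B) = A (Ups B)]: both series are reindexed along the block
   of [i], on which [s] acts as the successor. *)
Lemma mmul_cshift_row (A B B' : smat R) i j j' : shift_comm A ->
  (forall m, B (s m) j = B' m j') -> mmul A B (s i) j = mmul A B' i j'.
Proof.
move=> [A_blk A_s A_start] BB'.
have ap : (cblk p n i < p)%N := cblk_lt p_gt0 n_gt0 i.
set a := cblk p n i in ap *; set idx := cidx p n a.
have idx_incr c : (idx c < idx c.+1)%N by apply: cidx_ltS.
have blk_idx c : blk (idx c) = a by apply: cblk_cidx.
have kk_idx c : kk (idx c) = c by apply: ckk_cidx.
have s_idx c : s (idx c) = idx c.+1 by apply: cshift_cidx.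
have reindex (i' : nat) (C : smat R) l : blk i' = a ->
    mmul A C i' l = limn (fun N => \sum_(c < N) A i' (idx c) * C (idx c) l).
  move=> i'a; rewrite /mmul.
  apply: (limn_series_reindex idx_incr (u := fun c => A i' (idx c) * C (idx c) l)
    (v := fun m => A i' m * C m l)) => // N.
  by move=> N_out; rewrite A_blk ?mul0r // i'a; apply: cidx_notin_cblk N_out.
rewrite (reindex _ _ _ (cblk_cshift p_gt0 n_gt0 i)) (reindex i) //.
rewrite -[LHS]limn_shiftS; congr (limn _); apply/funext => N.
rewrite big_ord_recl A_start ?mul0r ?add0r //.
by apply: eq_bigr => c _; rewrite /bump /= -s_idx A_s BB'.
Qed.

Lemma shift_comm_entrywise (I : Type) (F : I -> smat R) (Phi : (I -> R) -> R) (B : smat R) :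
  (forall x, shift_comm (F x)) -> Phi (fun _ => 0) = 0 ->
  (forall i k, B i k = Phi (fun x => F x i k)) -> shift_comm B.
Proof.
move=> F_comm Phi0 BF; split=> [i k blk_ik|i k|i k blk_ik kk0].
- rewrite BF -Phi0; congr Phi; apply/funext => x.
  by have [F_blk _ _] := F_comm x; apply: F_blk.
- rewrite !BF; congr Phi; apply/funext => x.
  by have [_ F_s _] := F_comm x; apply: F_s.
- rewrite BF -Phi0; congr Phi; apply/funext => x.
  by have [_ _ F_start] := F_comm x; apply: F_start.
Qed.

Lemma shift_comm_idm : shift_comm (idm R).
Proof.
split=> [i k blk_ik|i k|i k _ kk0]; rewrite /idm.
- by case: eqP => // ik; rewrite ik in blk_ik.
- by rewrite (inj_eq (cshift_inj p_gt0 n_gt0)).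
- by case: eqP => // sik; move: kk0; rewrite -sik ckk_cshift.
Qed.

Lemma shift_comm_mmul (A B : smat R) : shift_comm A -> shift_comm B -> shift_comm (mmul A B).
Proof.
move=> A_comm B_comm; have [A_blk _ A_start] := A_comm; have [B_blk _ B_start] := B_comm.
split=> [i k blk_ik|i k|i k blk_ik kk0].
- apply: (limn_series_eq0 (a := fun m => A i m * B m k)) => m.
  case: (eqVneq (blk m) (blk i)) => [mi|/eqP mi]; last by rewrite A_blk ?mul0r.
  by rewrite B_blk ?mulr0 // mi.
- by apply: mmul_cshift_row => // m; case: B_comm.
- apply: (limn_series_eq0 (a := fun m => A (s i) m * B m k)) => m.
  case: (eqVneq (blk m) (blk i)) => [mi|/eqP mi]; last first.
    by rewrite A_blk ?mul0r // cblk_cshift.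
  have [kkm0|kkm_gt0] := posnP (kk m); first by rewrite A_start ?mul0r.
  have -> : m = s (cidx p n (blk i) (kk m).-1).
    by rewrite cshift_cidx ?cblk_lt // prednK // -mi cidxK.
  by rewrite B_start ?mulr0 // cblk_cidx ?cblk_lt // blk_ik.
Qed.

Lemma shift_comm_mpow (A : smat R) j : shift_comm A -> shift_comm (mpow A j).
Proof. by move=> A_comm; elim: j => [|j IH]; [exact: shift_comm_idm|exact: shift_comm_mmul]. Qed.

Lemma shift_comm_trm_mpow (A : smat R) j : shift_comm (trm A) -> shift_comm (trm (mpow A j)).
Proof.
move=> A_comm; elim: j => [|j IH]; first by rewrite /= trm_idm; apply: shift_comm_idm.
by rewrite mpowS trm_mmul; apply: shift_comm_mmul.
Qed.

Lemma shift_comm_mopp (A : smat R) : shift_comm A -> shift_comm (mopp A).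
Proof.
move=> A_comm; apply: (@shift_comm_entrywise unit (fun=> A) (fun F => - F tt)) => //.
exact: oppr0.
Qed.

Lemma shift_comm_exp_series (G : nat -> smat R) : (forall m, shift_comm (G m)) ->
  shift_comm (fun i k => limn (fun N => \sum_(m < N) G m i k / (m`!)%:R)).
Proof.
move=> G_comm; apply: (@shift_comm_entrywise _ G
  (fun F => limn (fun N => \sum_(m < N) F m / (m`!)%:R)) _ G_comm) => //.
by apply: (limn_series_eq0 (a := fun m => 0 / (m`!)%:R)) => m; rewrite mul0r.
Qed.

Lemma shift_comm_flow_series (G : nat -> nat -> smat R) (t : nat -> nat -> R) :
  (forall a j, shift_comm (G a j)) ->
  shift_comm (fun i k => \sum_(a < p) limn (fun N => \sum_(j < N) t a j.+1 * G a j.+1 i k)).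
Proof.
move=> G_comm; apply: (@shift_comm_entrywise _ (fun x : nat * nat => G x.1 x.2.+1)
  (fun F => \sum_(a < p) limn (fun N => \sum_(j < N) t a j.+1 * F (nat_of_ord a, nat_of_ord j))))
  => //=.
apply: big1 => a _.
by apply: (limn_series_eq0 (a := fun j => t a j.+1 * 0)) => j; rewrite mulr0.
Qed.

End ShiftCommuting.

Section LambdaMatrices.
Variable R : realType.
Variables (p : nat) (n : nat -> nat).
Hypothesis p_gt0 : (0 < p)%N.
Hypothesis n_gt0 : forall a, (a < p)%N -> (0 < n a)%N.

Local Notation blk := (cblk p n).
Local Notation kk := (ckk p n).
Local Notation s := (cshift p n).

Lemma Lam_cshift a i k : Lam R p n a i k = ((blk i == a) && (k == s i))%:R.
Proof.
rewrite /Lam; congr ((nat_of_bool _)%:R); case: (eqVneq (blk i) a) => //= ia.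
case: (eqVneq k (s i)) => [->|k_si]; first by rewrite cblk_cshift // ckk_cshift // ia !eqxx.
apply: negbTE; apply: contra k_si => /andP[/eqP ka /eqP kk_k].
apply/eqP; apply: (cblk_ckk_inj p_gt0 n_gt0); first by rewrite cblk_cshift // ka.
by rewrite ckk_cshift.
Qed.

Lemma Ups_selm : Ups R p n = selm R s.
Proof.
apply/funext => i; apply/funext => k; rewrite /Ups.
under eq_bigr => a _ do rewrite Lam_cshift.
rewrite (bigD1 (Ordinal (cblk_lt p_gt0 n_gt0 i))) //= eqxx big1 ?addr0 // => a ia.
suff -> : (blk i == a) = false by [].
by apply/negbTE; apply: contra ia => /eqP ia; apply/eqP/val_inj.
Qed.

Lemma rowfin_Lam a : rowfin (Lam R p n a).
Proof.
move=> i; exists (s i).+1 => k si_k; rewrite Lam_cshift.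
by case: (eqVneq k (s i)) si_k => [->|]; rewrite ?ltnn ?andbF.
Qed.

Lemma rowfin_Ups : rowfin (Ups R p n).
Proof. by rewrite Ups_selm; apply: rowfin_selm. Qed.

Lemma Lam_orthogonal : orthogonal_family (Lam R p n) p.
Proof.
move=> a b _ _ ab; apply/funext => i; apply/funext => k.
rewrite (mmul_row_bound (K := (s i).+1)) => [|m si_m]; last first.
  by rewrite Lam_cshift; case: (eqVneq m (s i)) si_m => [->|]; rewrite ?ltnn ?andbF.
rewrite big_ord_recr big1 /= => [|m _]; last first.
  by rewrite Lam_cshift (ltn_eqF (ltn_ord m)) andbF mul0r.
rewrite add0r !Lam_cshift cblk_cshift //.
case: (eqVneq (blk i) a) => [ia|_]; last by rewrite mul0r.
by rewrite -ia in ab; rewrite (negbTE ab) mulr0.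
Qed.

Lemma mvec_Ups_chi a (x : R) : mvec (Ups R p n) (chi p n a x) = (fun i => x * chi p n a x i).
Proof.
apply/funext => i; rewrite Ups_selm mvec_selm /chi cblk_cshift // ckk_cshift //.
by case: eqP; rewrite ?exprS ?mulr0.
Qed.

Lemma shift_comm_Lam a : shift_comm p n (Lam R p n a).
Proof.
split=> [i k blk_ik|i k|i k _ kk0]; rewrite !Lam_cshift.
- case: (eqVneq k (s i)) => [ki|]; rewrite ?andbF //.
  by case: blk_ik; rewrite ki cblk_cshift.
- by rewrite cblk_cshift // (inj_eq (cshift_inj p_gt0 n_gt0)).
- case: (eqVneq k (s (s i))) => [ki|]; rewrite ?andbF //.
  by move: kk0; rewrite ki ckk_cshift.
Qed.

Lemma shift_comm_W0 (t : nat -> nat -> R) : shift_comm p n (W0 p n t).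
Proof.
apply: shift_comm_exp_series => m; apply: shift_comm_mpow => //.
apply: (@shift_comm_flow_series _ _ _ (fun a => mpow (Lam R p n a))) => a j.
by apply: shift_comm_mpow => //; apply: shift_comm_Lam.
Qed.

Lemma shift_comm_trm_Wb0inv (t : nat -> nat -> R) : shift_comm p n (trm (Wb0inv p n t)).
Proof.
pose F := tflow p (fun b => trm (Lam R p n b)) t.
apply: (@shift_comm_exp_series _ _ _ (fun m => trm (mpow (mopp F) m))) => m.
apply: shift_comm_trm_mpow => //; apply: (@shift_comm_mopp _ _ _ (trm F)).
apply: (@shift_comm_flow_series _ _ _ (fun b j => trm (mpow (trm (Lam R p n b)) j))) => b j.
by apply: shift_comm_trm_mpow => //; apply: shift_comm_Lam.
Qed.

End LambdaMatrices.

Section Hankel.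
Variable R : realType.
Variables (p1 p2 : nat) (n1 n2 : nat -> nat).
Hypotheses (p1_gt0 : (0 < p1)%N) (p2_gt0 : (0 < p2)%N).
Hypothesis n1_gt0 : forall a, (a < p1)%N -> (0 < n1 a)%N.
Hypothesis n2_gt0 : forall b, (b < p2)%N -> (0 < n2 b)%N.

Local Notation s1 := (cshift p1 n1).
Local Notation s2 := (cshift p2 n2).

Definition hankel (G : smat R) := forall i k, G (s1 i) k = G i (s2 k).

Lemma moment_hankel mu I w1 w2 : hankel (moment mu I p1 p2 n1 n2 w1 w2).
Proof.
move=> i k; rewrite /moment !cblk_cshift // !ckk_cshift //.
by rewrite addSn addnS.
Qed.

Lemma gt_hankel (g : smat R) t tb : hankel g -> hankel (gt p1 p2 n1 n2 g t tb).
Proof.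
move=> g_hankel i k; set X := mmul (W0 p1 n1 t) g.
(* The column shift of [g(t) = X bar W_0(t)^{-1}] is a row shift of its transpose. *)
have X_hankel : hankel X.
  by move=> i' k'; apply: (mmul_cshift_row p1_gt0 n1_gt0 i' (shift_comm_W0 p1_gt0 n1_gt0 t)).
rewrite /gt -/X -[LHS]/(trm (mmul X _) k (s1 i)) -[RHS]/(trm (mmul X _) (s2 k) i) trm_mmul.
symmetry; apply: (mmul_cshift_row p2_gt0 n2_gt0 k (shift_comm_trm_Wb0inv p2_gt0 n2_gt0 tb)).
by move=> m; rewrite /trm X_hankel.
Qed.

Lemma mmul_Ups_hankel G : hankel G -> mmul (Ups R p1 n1) G = mmul G (trm (Ups R p2 n2)).
Proof.
move=> G_hankel; apply/funext => i; apply/funext => k.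
by rewrite !Ups_selm // mmul_selm mmul_trm_selm.
Qed.

End Hankel.

Theorem proposition3p9 (R : realType)
  (mu : {finite_measure set R -> \bar R}) (I : interval R)
  (p1 p2 : nat) (n1 n2 : nat -> nat) (w1 w2 : nat -> R -> R)
  (t tb : nat -> nat -> R)
  (S Si Sb Sbi : smat R) :
  (0 < p1)%N -> (0 < p2)%N ->
  (forall a, (a < p1)%N -> (0 < n1 a)%N) ->
  (forall b, (b < p2)%N -> (0 < n2 b)%N) ->
  (* the moment integrals converge *)
  (forall i j, mu.-integrable [set` I]
     (fun x => (x ^+ (ckk p1 n1 i + ckk p2 n2 j) * w1 (cblk p1 n1 i) x
                * w2 (cblk p2 n2 j) x)%:E)) ->
  (* the series defining g(t) = (W_0(t) g) bar W_0(t)^{-1} converge *)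
  (forall i j, cvgn (fun N => \sum_(k < N)
      W0 p1 n1 t i k * moment mu I p1 p2 n1 n2 w1 w2 k j)) ->
  (forall i j, cvgn (fun N => \sum_(k < N)
      mmul (W0 p1 n1 t) (moment mu I p1 p2 n1 n2 w1 w2) i k
      * Wb0inv p2 n2 tb k j)) ->
  (* S unit lower triangular, with (lower triangular) inverse Si = S^{-1} *)
  lower_tri S -> (forall i, S i i = 1) ->
  lower_tri Si -> mmul S Si = idm R -> mmul Si S = idm R ->
  (* bar S upper triangular invertible, with (upper triangular) inverse Sbi *)
  upper_tri Sb ->
  upper_tri Sbi -> mmul Sb Sbi = idm R -> mmul Sbi Sb = idm R ->
  (* the factorization g(t) = S^{-1} bar S *)
  gt p1 p2 n1 n2 (moment mu I p1 p2 n1 n2 w1 w2) t tb = mmul Si Sb ->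
  let L a := mmul (mmul S (Lam R p1 n1 a)) Si in
  let Lb b := mmul (mmul Sb (trm (Lam R p2 n2 b))) Sbi in
  let J := mmul (mmul S (Ups R p1 n1)) Si in
  let A a x := mvec S (chi p1 n1 a x) in
  let Ab b x := mvec (trm Sbi) (chi p2 n2 b x) in
  forall j, (1 <= j)%N ->
    (forall i k, mpow J j i k = \sum_(a < p1) mpow (L a) j i k) /\
    (forall i k, mpow J j i k = \sum_(b < p2) mpow (Lb b) j i k) /\
    (forall a', (a' < p1)%N -> forall (x : R) i,
        mvec (mpow J j) (A a' x) i = x ^+ j * A a' x i) /\
    (forall b', (b' < p2)%N -> forall (x : R) i,
        mvec (trm (mpow J j)) (Ab b' x) i = x ^+ j * Ab b' x i).
Proof.
move=> p1_gt0 p2_gt0 n1_gt0 n2_gt0 _ _ _ S_low _ Si_low SSi SiS Sb_up Sbi_up SbSbi SbiSb gt_fact.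
move=> L Lb J A Ab j j_gt0.
have [S_fin Si_fin] := (rowfin_lower S_low, rowfin_lower Si_low).
have [Sb_fin Sbi_fin] := (rowfin_trm_upper Sb_up, rowfin_trm_upper Sbi_up).
have G_hankel : hankel p1 p2 n1 n2 (mmul Si Sb).
  by rewrite -gt_fact; apply: gt_hankel => //; apply: moment_hankel.
have J_dual : J = mmul (mmul Sb (trm (Ups R p2 n2))) Sbi.
  apply: (conj_intertwine S_fin Si_fin Sbi_fin (rowfin_Ups R p1_gt0 n1_gt0)
    (rowfin_Ups R p2_gt0 n2_gt0) SSi SbSbi).
  exact: mmul_Ups_hankel.
split; [|split; [|split]].
- exact: (mpow_conj_sum_orth S_fin Si_fin SiS (rowfin_Lam R p1_gt0 n1_gt0)
    (Lam_orthogonal R p1_gt0 n1_gt0) j_gt0).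
- rewrite J_dual; exact: (mpow_conj_trm_sum_orth Sb_fin Sbi_fin SbiSb
    (rowfin_Lam R p2_gt0 n2_gt0) (Lam_orthogonal R p2_gt0 n2_gt0) j_gt0).
- move=> a' _ x; exact: (mvec_mpow_conj_eigen S_fin Si_fin SiS
    (rowfin_Ups R p1_gt0 n1_gt0) (mvec_Ups_chi p1_gt0 n1_gt0 a' x) j_gt0).
- move=> b' _ x; rewrite J_dual; exact: (mvec_trm_mpow_conj_eigen Sb_fin Sbi_fin SbiSb
    (rowfin_Ups R p2_gt0 n2_gt0) (mvec_Ups_chi p2_gt0 n2_gt0 b' x) j_gt0).
Qed.
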